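(* Let $q\ge1$. Let $0=s_0<s_1<\dots<s_q=1$ be nodes and $\{\lambda_n^{[q]}\}_{n=0}^q$ the corresponding Lagrange basis of $\mathcal{P}^q([0,1])$, and let $\{\lambda_m^{[q-1]}\}_{m=0}^{q-1}$ be the Lagrange basis of $\mathcal{P}^{q-1}([0,1])$ with respect to some set of $q$ distinct nodes in $[0,1]$. Define $a_{mn}=\int_0^1\dot\lambda_n^{[q]}(t)\lambda_{m-1}^{[q-1]}(t)\,dt$ for $m=1,\dots,q$, $n=0,\dots,q$, let $A=(a_{mn})_{m,n=1}^q$ (which is invertible) and $\bar A=(\bar a_{mn})=A^{-1}$. Then for every $m=1,\dots,q$, $$\sum_{n=1}^q\bar a_{mn}a_{n0}=-1.$$
   Context: $\mathcal{P}^q([0,1])$ is the space of polynomials of degree $\le q$ on $[0,1]$; the Lagrange basis for nodes $s_0,\dots,s_q$ is $\lambda_n(s)=\prod_{l\ne n}(s-s_l)/(s_n-s_l)$. *)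

From HB Require Import structures.
From mathcomp Require Import all_boot all_order all_algebra.
From mathcomp Require Import all_classical all_reals all_analysis.
Set Implicit Arguments. Unset Strict Implicit. Unset Printing Implicit Defensive.
Import Order.TTheory GRing.Theory Num.Theory.
Local Open Scope ring_scope.

Definition lagrange_basis (F : fieldType) (k : nat) (x : 'I_k -> F) (n : 'I_k)
  : {poly F} :=
  \prod_(l < k | l != n) (('X - (x l)%:P) * ((x n - x l)^-1)%:P).

Definition int01 (R : realType) (p : {poly R}) : R :=
  Rintegral lebesgue_measure `[0%R, 1%R]%classic (fun t => p.[t]).

From HB Require Import structures.
From mathcomp Require Import all_boot all_order all_algebra.
From mathcomp Require Import all_classical all_reals all_analysis.
From mathcomp Require Import polyrcf.
Set Implicit Arguments. Unset Strict Implicit. Unset Printing Implicit Defensive.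
Import Order.TTheory GRing.Theory Num.Theory.
Import numFieldNormedType.Exports.
Local Open Scope ring_scope.

(* Since the lambda_n^[q] sum to 1, their derivatives sum to 0, so the column
   (a_n0)_n is minus the sum of the columns of A, i.e. a_.0 = - A 1, and hence
   A^-1 a_.0 = -1.  Invertibility of A: if v^T A = 0, then p := sum_j v_j
   lambda_j^[q] has a derivative of degree < q which is L^2(0,1)-orthogonal to
   the Lagrange basis lambda^[q-1], hence to itself; so p' = 0, and p, which
   vanishes at s_0, is 0, forcing v = 0. *)

Lemma size_sum_leq (R : nzSemiRingType) (I : finType) (P : pred I)
    (f : I -> {poly R}) (k : nat) :
  (forall i, P i -> (size (f i) <= k)%N) ->
  (size (\sum_(i | P i) f i)%R <= k)%N.
Proof. by move=> fk; rewrite (leq_trans (size_sum _ _ _)) //; apply/bigmax_leqP. Qed.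

Section LagrangeBasis.
Variables (F : fieldType) (k : nat) (x : 'I_k -> F).
Hypothesis x_inj : injective x.

Let x_subr_neq0 (n l : 'I_k) : l != n -> x n - x l != 0.
Proof. by move=> ln; rewrite subr_eq0 (inj_eq x_inj) eq_sym. Qed.

Lemma size_lagrange_basis n : (size (lagrange_basis x n) <= k)%N.
Proof.
have size_factor l : l != n -> size (('X - (x l)%:P) * ((x n - x l)^-1)%:P) = 2.
  by move=> ln; rewrite mulrC mul_polyC size_scale ?size_XsubC ?invr_eq0 ?x_subr_neq0.
rewrite /lagrange_basis size_prod => [|l ln]; last by rewrite -size_poly_eq0 size_factor.
rewrite (eq_bigr (fun=> 2)) // sum_nat_const.
have -> : #|[pred l : 'I_k | l != n]| = k.-1.
  by rewrite -[in RHS](card_ord k) -(cardC1 n); apply: eq_card.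
by clear size_factor; case: k n => [[]//|m n] /=; rewrite mulnC mul2n -addnn subSn ?addnK ?leq_addr.
Qed.

Lemma horner_lagrange_basis n j : (lagrange_basis x n).[x j] = (j == n)%:R.
Proof.
rewrite /lagrange_basis horner_prod; have [->|jn] := eqVneq j n.
  by apply: big1 => l ln; rewrite !hornerE divff ?x_subr_neq0.
by rewrite (bigD1 j) //= !hornerE subrr !mul0r.
Qed.

Lemma size_lagrange_comb (c : 'I_k -> F) :
  (size (\sum_n c n *: lagrange_basis x n)%R <= k)%N.
Proof.
by apply: size_sum_leq => n _; apply: leq_trans (size_scale_leq _ _) (size_lagrange_basis n).
Qed.

Lemma horner_lagrange_comb (c : 'I_k -> F) j :
  (\sum_n c n *: lagrange_basis x n).[x j] = c j.
Proof.
rewrite horner_sum (bigD1 j) //= big1 => [|n nj].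
  by rewrite hornerZ horner_lagrange_basis eqxx mulr1 addr0.
by rewrite hornerZ horner_lagrange_basis eq_sym (negbTE nj) mulr0.
Qed.

Lemma lagrange_interpolation (p : {poly F}) : (size p <= k)%N ->
  p = \sum_n p.[x n] *: lagrange_basis x n.
Proof.
move=> sp; apply/eqP; rewrite -subr_eq0; apply/eqP.
apply: (@roots_geq_poly_eq0 _ _ [seq x i | i <- enum 'I_k]).
- by apply/allP => _ /mapP [j _ ->]; rewrite /root !hornerE horner_lagrange_comb subrr.
- by rewrite map_inj_uniq ?enum_uniq.
- rewrite size_map size_enum_ord (leq_trans (size_polyD _ _)) //.
  by rewrite geq_max sp size_polyN size_lagrange_comb.
Qed.

Lemma sum_lagrange_basis : (0 < k)%N -> \sum_n lagrange_basis x n = 1.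
Proof.
move=> k_gt0; rewrite [RHS]lagrange_interpolation ?size_poly1 //.
by apply: eq_bigr => n _; rewrite hornerC scale1r.
Qed.

End LagrangeBasis.

Lemma poly_antiderivative (R : numFieldType) (p : {poly R}) :
  exists P : {poly R}, P^`() = p.
Proof.
exists (\poly_(i < (size p).+1) (if i is j.+1 then p`_j / j.+1%:R else 0)).
apply/polyP => i; rewrite coef_deriv coef_poly ltnS; case: ltnP => [_|pi].
  by rewrite -[_ *+ i.+1]mulr_natr -mulrA mulVf ?mulr1 ?pnatr_eq0.
by rewrite mul0rn nth_default.
Qed.

Lemma deriv_eq0_polyC (R : numDomainType) (p : {poly R}) :
  p^`() = 0 -> p = (p`_0)%:P.
Proof.
move=> dp0; apply/polyP => -[|i]; rewrite coefC //=.
by have /eqP := congr1 (fun u : {poly R} => u`_i) dp0; rewrite coef_deriv coef0 mulrn_eq0 => /eqP.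
Qed.

Lemma polyC_const_on01 (R : numFieldType) (p : {poly R}) (c : R) :
  (forall y, 0 <= y <= 1 -> p.[y] = c) -> p = c%:P.
Proof.
move=> pc; apply/eqP; rewrite -subr_eq0; apply/eqP.
pose pts := [seq (i.+1%:R)^-1 : R | i <- iota 0 (size (p - c%:P))].
apply: (@roots_geq_poly_eq0 _ _ pts).
- apply/allP => _ /mapP [i _ ->]; rewrite /root !hornerE pc ?subrr //.
  by rewrite invr_ge0 ler0n invf_le1 ?ltr0Sn // ler1n.
- rewrite map_inj_in_uniq ?iota_uniq // => i j _ _ /invr_inj /eqP.
  by rewrite eqr_nat => /eqP [].
- by rewrite size_map size_iota.
Qed.

Section IntegralOnUnitInterval.
Variable R : realType.
Implicit Types p P : {poly R}.

Lemma int01_antiderivative p P : P^`() = p -> int01 p = P.[1] - P.[0].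
Proof.
move=> dP; rewrite /int01 /Rintegral (@continuous_FTC2 _ (horner p) (horner P)) //=.
- apply: continuous_subspaceT => x; exact: continuous_horner.
- split => [x _||]; first exact: derivable_horner.
  + apply: cvg_at_right_filter; exact: continuous_horner.
  + apply: cvg_at_left_filter; exact: continuous_horner.
- by move=> x _; rewrite -derivE dP.
Qed.

Lemma int01D p1 p2 : int01 (p1 + p2) = int01 p1 + int01 p2.
Proof.
have [P1 dP1] := poly_antiderivative p1; have [P2 dP2] := poly_antiderivative p2.
rewrite (int01_antiderivative dP1) (int01_antiderivative dP2).
rewrite (int01_antiderivative (P := P1 + P2)) ?derivD ?dP1 ?dP2 //.
by rewrite !hornerD opprD addrACA.
Qed.

Lemma int01Z c p : int01 (c *: p) = c * int01 p.
Proof.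
have [P dP] := poly_antiderivative p.
rewrite (int01_antiderivative dP) (int01_antiderivative (P := c *: P)) ?derivZ ?dP //.
by rewrite !hornerZ mulrBr.
Qed.

Lemma int01N p : int01 (- p) = - int01 p.
Proof. by rewrite -scaleN1r int01Z mulN1r. Qed.

Lemma int01_sum I (s : seq I) (P : pred I) (f : I -> {poly R}) :
  int01 (\sum_(i <- s | P i) f i) = \sum_(i <- s | P i) int01 (f i).
Proof.
have int01_0 : int01 (0 : {poly R}) = 0 by rewrite -(scale0r 0) int01Z mul0r.
exact: (big_morph _ int01D int01_0).
Qed.

(* An antiderivative of h^2 is nondecreasing on [0,1]; if its values at 0 and 1
   agree it is constant there, hence constant, and h^2 is its derivative. *)
Lemma int01_sqr_eq0 (h : {poly R}) : int01 (h * h) = 0 -> h = 0.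
Proof.
have [P dP] := poly_antiderivative (h * h).
rewrite (int01_antiderivative dP) => /eqP; rewrite subr_eq0 => /eqP P10.
have P_mono : {in `[0, 1] &, {homo horner P : x y / x <= y}}.
  by apply: ler_hornerW => y _; rewrite dP hornerM -expr2 sqr_ge0.
have P_const y : 0 <= y <= 1 -> P.[y] = P.[0].
  move=> /andP[y0 y1]; have y01 : y \in `[0, 1] by rewrite in_itv /= y0.
  by apply/eqP; rewrite eq_le -{1}P10 !P_mono // in_itv /= ?lexx ?ler01.
have /eqP := dP; rewrite (polyC_const_on01 P_const) derivC eq_sym.
by rewrite mulf_eq0 orbb => /eqP.
Qed.

End IntegralOnUnitInterval.

Lemma int01_orthogonal_lagrange_eq0 (R : realType) (k : nat) (r : 'I_k -> R)
    (g : {poly R}) :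
  injective r -> (size g <= k)%N ->
  (forall m, int01 (g * lagrange_basis r m) = 0) -> g = 0.
Proof.
move=> r_inj sg g_orth; apply: int01_sqr_eq0.
rewrite {2}(lagrange_interpolation r_inj sg) mulr_sumr int01_sum big1 // => m _.
by rewrite -scalerAr int01Z g_orth mulr0.
Qed.

Section LagrangeDerivativeMatrix.
Variables (R : realType) (q : nat) (s : 'I_q.+1 -> R) (r : 'I_q -> R).
Hypotheses (s_inj : injective s) (r_inj : injective r).

Lemma int01_deriv_lagrange_basis0 (g : {poly R}) :
  int01 ((lagrange_basis s ord0)^`() * g) =
  - \sum_(j < q) int01 ((lagrange_basis s (lift ord0 j))^`() * g).
Proof.
have /(congr1 (@deriv R)) := sum_lagrange_basis s_inj (ltn0Sn q).
rewrite -polyC1 derivC raddf_sum big_ord_recl => /eqP; rewrite addr_eq0 => /eqP ->.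
by rewrite mulNr int01N mulr_suml int01_sum.
Qed.

Lemma lagrange_deriv_unitmx :
  \matrix_(i < q, j < q)
     int01 ((lagrange_basis s (lift ord0 j))^`() * lagrange_basis r i)
    \in unitmx.
Proof.
rewrite unitmxE unitfE -det_tr; apply/negP => /det0P [v v_neq0 vA0].
pose c n := oapp (v 0) 0 (unlift ord0 n).
pose p := \sum_n c n *: lagrange_basis s n.
have p_lift : p = \sum_(j < q) v 0 j *: lagrange_basis s (lift ord0 j).
  rewrite /p big_ord_recl /c unlift_none scale0r add0r.
  by apply: eq_bigr => j _; rewrite liftK.
have dp_orth m : int01 (p^`() * lagrange_basis r m) = 0.
  have := congr1 (fun M : 'rV[R]_q => M 0 m) vA0; rewrite !mxE => <-.
  rewrite p_lift raddf_sum mulr_suml int01_sum; apply: eq_bigr => j _.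
  by rewrite /= derivZ -scalerAl int01Z !mxE.
have dp0 : p^`() = 0.
  apply: int01_orthogonal_lagrange_eq0 r_inj _ dp_orth.
  have [->|p_neq0] := eqVneq p 0; first by rewrite deriv0 size_poly0.
  by rewrite -ltnS (leq_trans (lt_size_deriv p_neq0)) ?size_lagrange_comb.
have p0 : p = 0.
  rewrite (deriv_eq0_polyC dp0) -[p`_0](hornerC _ (s ord0)) -(deriv_eq0_polyC dp0).
  by rewrite horner_lagrange_comb // /c unlift_none.
move/negP: v_neq0; apply; apply/eqP/rowP => j; rewrite mxE.
by have := horner_lagrange_comb s_inj c (lift ord0 j); rewrite -/p p0 horner0 /c liftK.
Qed.

End LagrangeDerivativeMatrix.

Theorem lemmaA1 (R : realType) (q : nat) (hq : (0 < q)%N)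
  (s : 'I_q.+1 -> R) (r : 'I_q -> R)
  (hs0 : s ord0 = 0) (hsq : s ord_max = 1)
  (hsinc : forall i j : 'I_q.+1, (i < j)%N -> s i < s j)
  (hrinj : injective r) (hr01 : forall i, 0 <= r i <= 1) :
  let a (m : 'I_q) (n : 'I_q.+1) :=
    int01 ((lagrange_basis s n)^`() * lagrange_basis r m) in
  let A : 'M[R]_q := \matrix_(i < q, j < q) a i (lift ord0 j) in
  A \in unitmx /\
  forall m : 'I_q, \sum_(n < q) (invmx A) m n * a n ord0 = -1.
Proof.
move=> a A.
have s_inj : injective s by apply: inc_inj; apply: le_mono.
have A_unit : A \in unitmx by exact: lagrange_deriv_unitmx.
have a0E : \col_n a n ord0 = - (A *m const_mx 1).
  apply/colP => m; rewrite !mxE /a (int01_deriv_lagrange_basis0 s_inj); congr (- _).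
  by apply: eq_bigr => j _; rewrite !mxE mulr1.
split=> // m.
have := congr1 (fun M : 'cV[R]_q => M m 0) (congr1 (mulmx (invmx A)) a0E).
by rewrite mulmxN mulmxA mulVmx // mul1mx !mxE => <-; apply: eq_bigr => n _; rewrite mxE.
Qed.
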